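(* Let $(\Lambda,d)$ be a finitely aligned $k$-graph and give $X_\Lambda$ the topology generated by the subbasis $\{D_F,X_\Lambda\setminus D_F:F\in S_\Lambda\}$. Then for each $v\in\Lambda^0$, $D_v:=D_{\{(v,v)\}}=\{x\in X_\Lambda: r(x)=v\}$ is compact; in particular $X_\Lambda$ is a locally compact Hausdorff space.
   Context: A $k$-graph $(\Lambda,d)$ is a countable small category $\Lambda$ (objects identified with identity morphisms) with a functor $d:\Lambda\to\mathbb N^k$ satisfying unique factorization: whenever $d(\lambda)=m+n$ there are unique $\mu,\nu$ with $d(\mu)=m$, $d(\nu)=n$, $\lambda=\mu\nu$. $\Lambda^0=d^{-1}(0)$, $r,s$ range/source. $\Lambda^{\min}(\lambda,\mu)=\{(\alpha,\beta):\lambda\alpha=\mu\beta,\ d(\lambda\alpha)=d(\lambda)\vee d(\mu)\}$; finitely aligned means all are finite. $S_\Lambda$ is the set of finite $F\subseteq\{(\lambda,\mu):s(\lambda)=s(\mu)\}$ such that distinct $(\lambda,\mu),(\nu,\omega)\in F$ satisfy $\Lambda^{\min}(\lambda,\nu)=\Lambda^{\min}(\mu,\omega)=\emptyset$. $\Omega_{k,m}$ ($m\in(\mathbb N\cup\{\infty\})^k$): objects $\{p\in\mathbb N^k:p\le m\}$, morphisms $(p,q)$ with $p\le q\le m$, $r(p,q)=p$, $s(p,q)=q$, $d(p,q)=q-p$. $X_\Lambda$ = all degree-preserving functors $x:\Omega_{k,m}\to\Lambda$; $d(x)=m$, $r(x)=x(0,0)$. $D_F=\{x\in X_\Lambda:\exists(\lambda,\mu)\in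 F,\ d(\mu)\le d(x),\ x(0,d(\mu))=\mu\}$. This subbasis generates a Hausdorff topology. *)

From HB Require Import structures.
From mathcomp Require Import all_boot all_order.
From mathcomp Require Import boolp classical_sets cardinality topology.

Set Implicit Arguments.
Unset Strict Implicit.
Unset Printing Implicit Defensive.

Local Open Scope classical_set_scope.

Definition degk (k : nat) := 'I_k -> nat.
Definition degk0 (k : nat) : degk k := fun _ => 0.
Definition degk_add k (m n : degk k) : degk k := fun i => m i + n i.
Definition degk_join k (m n : degk k) : degk k := fun i => maxn (m i) (n i).
Definition degk_le k (m n : degk k) : Prop := forall i, m i <= n i.

(** Elements of (N ∪ {∞})^k : None stands for ∞. *)
Definition extdeg (k : nat) := 'I_k -> option nat.
Definition degk_le_ext k (q : degk k) (m : extdeg k) : Prop :=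
  forall i, match m i with Some mi => q i <= mi | None => true end.

(** A k-graph: a countable small category whose objects are identified with
    the identity morphisms (the morphisms [v] with [r v = v = s v]),
    with composition [kc] (only meaningful on composable pairs, [s mu = r nu]),
    and a degree functor [kd] into N^k with the unique factorisation
    property. *)
Record kgraph (k : nat) := KGraph {
  Mor :> countType;
  kr : Mor -> Mor;
  ks : Mor -> Mor;
  kc : Mor -> Mor -> Mor;
  kd : Mor -> degk k;
  kr_obj : forall l, kr (kr l) = kr l /\ ks (kr l) = kr l;
  ks_obj : forall l, kr (ks l) = ks l /\ ks (ks l) = ks l;
  kc_idl : forall l, kc (kr l) l = l;
  kc_idr : forall l, kc l (ks l) = l;
  kc_r : forall m n, ks m = kr n -> kr (kc m n) = kr m;
  kc_s : forall m n, ks m = kr n -> ks (kc m n) = ks n;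
  kc_assoc : forall a b c, ks a = kr b -> ks b = kr c ->
    kc (kc a b) c = kc a (kc b c);
  kd_id : forall v, kr v = v -> ks v = v -> forall i, kd v i = 0;
  kd_comp : forall m n, ks m = kr n -> forall i, kd (kc m n) i = kd m i + kd n i;
  k_factor : forall l (m n : degk k), (forall i, kd l i = m i + n i) ->
    exists! mn : Mor * Mor,
      [/\ ks mn.1 = kr mn.2, (forall i, kd mn.1 i = m i),
          (forall i, kd mn.2 i = n i) & l = kc mn.1 mn.2]
}.

Section KGraphDefs.
Context {k : nat} (L : kgraph k).

Definition vertex (v : L) : Prop := forall i, kd v i = 0.

Definition Lmin (l m : L) : set (L * L) :=
  [set ab | [/\ ks l = kr ab.1, ks m = kr ab.2, kc l ab.1 = kc m ab.2 &
            kd (kc l ab.1) = degk_join (kd l) (kd m)]].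

Definition finitely_aligned : Prop := forall l m : L, finite_set (Lmin l m).

(** S_Λ : finite sets F of pairs with common source, distinct elements
    having empty Λ^min in both coordinates.  Finite sets are given as lists. *)
Definition in_S (F : seq (L * L)) : Prop :=
  (forall lm, lm \in F -> ks lm.1 = ks lm.2) /\
  (forall a b, a \in F -> b \in F -> a != b ->
     Lmin a.1 b.1 = set0 /\ Lmin a.2 b.2 = set0).

(** Degree-preserving functors x : Ω_{k,m} → Λ, encoded by m and the
    partial map (p, q) ↦ x(p, q), defined exactly when p ≤ q ≤ m. *)
Definition is_kpath (xm : extdeg k * (degk k -> degk k -> option L)) : Prop :=
  let: (m, f) := xm in
  [/\ (forall p q, (exists l, f p q = Some l) <-> (degk_le p q /\ degk_le_ext q m)),
      (forall p q l, f p q = Some l -> forall i, kd l i = q i - p i),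
      (forall p q l, f p q = Some l -> f p p = Some (kr l) /\ f q q = Some (ks l))
    & (forall p q t a b, f p q = Some a -> f q t = Some b -> f p t = Some (kc a b))].

Record XL := XPath {
  xdeg : extdeg k;
  xfun : degk k -> degk k -> option L;
  xpath : is_kpath (xdeg, xfun) }.

Definition xrange_is (x : XL) (v : L) : Prop := xfun x (@degk0 k) (@degk0 k) = Some v.

Definition DF (F : seq (L * L)) : set XL :=
  [set x | exists2 lm, lm \in F &
     degk_le_ext (kd lm.2) (xdeg x) /\ xfun x (@degk0 k) (kd lm.2) = Some lm.2].

Definition subbasis_index : set (option (bool * seq (L * L))) :=
  [set i | exists b F, i = Some (b, F) /\ in_S F].

Definition subbasis_set (i : option (bool * seq (L * L))) : set XL :=
  match i with
  | Some (true, F) => DF F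
  | Some (false, F) => ~` DF F
  | None => set0
  end.

End KGraphDefs.

HB.instance Definition _ k (L : kgraph k) := gen_eqMixin (XL L).
HB.instance Definition _ k (L : kgraph k) := gen_choiceMixin (XL L).
HB.instance Definition _ k (L : kgraph k) :=
  isSubBaseTopological.Build (XL L) (@subbasis_index k L) (@subbasis_set k L).

From HB Require Import structures.
From mathcomp Require Import all_boot all_order.
From mathcomp Require Import boolp classical_sets cardinality topology.
From mathcomp Require Import finmap.

(* A path x is determined by the cylinders D_mu = D_{(mu, mu)} containing it,
   and every D_mu is clopen, so X_Lambda is Hausdorff.  For compactness of D_v
   take an ultrafilter U containing D_v and let G be the set of mu with
   D_mu in U.  Any two members of G are initial segments of one path, and by
   finite alignment the intersection of D_mu and D_nu is the finite union of
   the D_{mu alpha} with (alpha, beta) in Lambda^min(mu, nu); as U is ultra,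
   G is directed for the join of degrees.  Hence the members of G glue to a
   single path x of degree sup_{mu in G} d(mu), and x lies in D_mu exactly
   when mu is in G.  So every subbasic neighbourhood of x is in U: D_F
   because F meets G, and X \ D_F because F is a finite set disjoint
   from G. *)

Set Implicit Arguments.
Unset Strict Implicit.
Unset Printing Implicit Defensive.
Local Open Scope classical_set_scope.

Lemma degk_le_refl k (p : degk k) : degk_le p p.
Proof. by move=> i. Qed.

Lemma degk_le_trans k (p q t : degk k) : degk_le p q -> degk_le q t -> degk_le p t.
Proof. by move=> pq qt i; exact: leq_trans (pq i) (qt i). Qed.

Lemma degk_le_ext_trans k (p q : degk k) (m : extdeg k) :
  degk_le p q -> degk_le_ext q m -> degk_le_ext p m.
Proof. by move=> pq qm i; move: (qm i); case: (m i) => // mi; exact: leq_trans. Qed.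

Lemma extdeg_eq k (m m' : extdeg k) :
  (forall q, degk_le_ext q m <-> degk_le_ext q m') -> m = m'.
Proof.
move=> mm'; apply/funext => i.
pose e (n : nat) : degk k := fun j => if j == i then n else 0.
have eP (m0 : extdeg k) n :
    degk_le_ext (e n) m0 <-> (if m0 i is Some mi then n <= mi else true).
  split=> [/(_ i)|nm j]; rewrite /e; first by rewrite eqxx; case: (m0 i).
  by case: (eqVneq j i) => [->|_]; [case: (m0 i) nm | case: (m0 j)].
have {}mm' n : (if m i is Some mi then n <= mi else true) <->
               (if m' i is Some mi then n <= mi else true).
  by rewrite -eP -eP.
case: (m i) (m' i) mm' => [a|] [b|] mm'.
- by congr Some; apply/eqP; rewrite eqn_leq (mm' a).1 ?(mm' b).2.
- by have := (mm' a.+1).2 isT; rewrite ltnn.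
- by have := (mm' b.+1).1 isT; rewrite ltnn.
- by [].
Qed.

Lemma ultra_seq_cup (T : Type) (I : eqType) (F : set_system T) (s : seq I)
    (f : I -> set T) : UltraFilter F ->
  F [set y | exists2 i, i \in s & f i y] -> exists2 i, i \in s & F (f i).
Proof.
move=> FU; have FP : ProperFilter F := ultra_proper.
elim: s => [|a s IHs] Fs.
  by have [y [i]] := filter_ex Fs; rewrite in_nil.
have [Fa|FaC] := in_ultra_setVsetC (f a) FU; first by exists a; rewrite ?mem_head.
have [i si Fi] : exists2 i, i \in s & F (f i).
  apply: IHs; apply: filterS (filterI Fs FaC) => y [[i]].
  by rewrite inE => /predU1P [-> /[swap] /[apply] []|si fiy _]; exists i.
by exists i; rewrite // inE si orbT.
Qed.

Lemma filter_seq_cap (T : Type) (I : eqType) (F : set_system T) (s : seq I)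
    (f : I -> set T) : Filter F ->
  (forall i, i \in s -> F (f i)) -> F [set y | forall i, i \in s -> f i y].
Proof.
move=> FF; elim: s => [|a s IHs] Fs.
  by apply: filterS filterT => y _ i; rewrite in_nil.
have /IHs Fs' : forall i, i \in s -> F (f i).
  by move=> i si; apply: Fs; rewrite inE si orbT.
apply: filterS (filterI (Fs a (mem_head a s)) Fs') => y [fay fsy] i.
by rewrite inE => /predU1P [->|/fsy].
Qed.

Section Paths.
Variables (k : nat) (L : kgraph k).
Implicit Types (x y : XL L) (p q t n : degk k) (l a b c mu nu : L).
Local Notation z0 := (@degk0 k).

Lemma xfun_defined x p q :
  (exists l, xfun x p q = Some l) <-> degk_le p q /\ degk_le_ext q (xdeg x).
Proof. by case: x => m f [H ? ? ?]; exact: H. Qed.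

Lemma xfun_kd x p q l : xfun x p q = Some l -> forall i, kd l i = q i - p i.
Proof. by case: x => m f [? H ? ?]; exact: H. Qed.

Lemma xfun_kr_ks x p q l : xfun x p q = Some l ->
  xfun x p p = Some (kr l) /\ xfun x q q = Some (ks l).
Proof. by case: x => m f [? ? H ?]; exact: H. Qed.

Lemma xfun_kc x p q t a b : xfun x p q = Some a -> xfun x q t = Some b ->
  xfun x p t = Some (kc a b).
Proof. by case: x => m f [? ? ? H]; exact: H. Qed.

Lemma xfun_composable x p q t a b : xfun x p q = Some a -> xfun x q t = Some b ->
  ks a = kr b.
Proof. by move=> /xfun_kr_ks[_ ea] /xfun_kr_ks[eb _]; move: ea; rewrite eb => -[]. Qed.

Lemma xfun_kc_eq x p q t a b c : xfun x p t = Some c ->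
  xfun x p q = Some a -> xfun x q t = Some b -> c = kc a b.
Proof. by move=> ec ea eb; move: (xfun_kc ea eb); rewrite ec => -[]. Qed.

Lemma kd_xfun0 x q l : xfun x z0 q = Some l -> kd l = q.
Proof. by move=> e; apply/funext => i; rewrite (xfun_kd e) subn0. Qed.

Lemma xrange_exists x : exists v, xfun x z0 z0 = Some v.
Proof. by apply/xfun_defined; split=> // i; case: (xdeg x i). Qed.

Lemma kc_factor_uniq (m n : degk k) a1 b1 a2 b2 :
  ks a1 = kr b1 -> ks a2 = kr b2 ->
  (forall i, kd a1 i = m i) -> (forall i, kd b1 i = n i) ->
  (forall i, kd a2 i = m i) -> (forall i, kd b2 i = n i) ->
  kc a1 b1 = kc a2 b2 -> a1 = a2 /\ b1 = b2.
Proof.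
move=> s1 s2 da1 db1 da2 db2 e.
have dc : forall i, kd (kc a1 b1) i = m i + n i by move=> i; rewrite kd_comp // da1 db1.
have [uv [_ uniq]] := k_factor dc.
have := uniq (a2, b2) (And4 s2 da2 db2 e).
by rewrite (uniq (a1, b1) (And4 s1 da1 db1 erefl)) => -[-> ->].
Qed.

Lemma xfun_agree_split x y p q t c : xfun x p t = Some c -> xfun y p t = Some c ->
  degk_le p q -> degk_le q t -> xfun x p q = xfun y p q /\ xfun x q t = xfun y q t.
Proof.
move=> xc yc pq qt.
have [_ tx] := (xfun_defined x p t).1 (ex_intro _ c xc).
have [_ ty] := (xfun_defined y p t).1 (ex_intro _ c yc).
have [a xa] : exists a, xfun x p q = Some a.
  by apply/xfun_defined; split=> //; exact: degk_le_ext_trans qt tx.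
have [b xb] : exists b, xfun x q t = Some b by apply/xfun_defined.
have [a' ya'] : exists a, xfun y p q = Some a.
  by apply/xfun_defined; split=> //; exact: degk_le_ext_trans qt ty.
have [b' yb'] : exists b, xfun y q t = Some b by apply/xfun_defined.
suff [ea eb] : a = a' /\ b = b' by rewrite xa xb ya' yb' ea eb.
apply: kc_factor_uniq (xfun_composable xa xb) (xfun_composable ya' yb')
  (xfun_kd xa) (xfun_kd xb) (xfun_kd ya') (xfun_kd yb')
  (etrans (esym (xfun_kc_eq xc xa xb)) (xfun_kc_eq yc ya' yb')).
Qed.

Lemma xfun_agree x y n l p q : xfun x z0 n = Some l -> xfun y z0 n = Some l ->
  degk_le p q -> degk_le q n -> xfun x p q = xfun y p q.
Proof.
move=> xl yl pq qn; have pn := degk_le_trans pq qn.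
have [_ e] := xfun_agree_split xl yl (fun i => leq0n (p i)) pn.
have [_ nx] := (xfun_defined x z0 n).1 (ex_intro _ l xl).
have [c xc] : exists c, xfun x p n = Some c by apply/xfun_defined.
by have [] := xfun_agree_split xc (etrans (esym e) xc) pq qn.
Qed.

Definition cylinder mu : set (XL L) := DF [:: (mu, mu)].

Lemma cylinderE mu x :
  cylinder mu x <-> degk_le_ext (kd mu) (xdeg x) /\ xfun x z0 (kd mu) = Some mu.
Proof.
split; first by case=> lm; rewrite inE => /eqP ->.
by exists (mu, mu); rewrite ?inE.
Qed.

Lemma DF_cylinder F x : DF F x <-> exists2 lm, lm \in F & cylinder lm.2 x.
Proof. by split=> -[lm lF h]; exists lm => //; [apply/cylinderE | move/cylinderE: h]. Qed.

Lemma cylinder_xfun0 x q l : xfun x z0 q = Some l -> cylinder l x.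
Proof.
move=> xl; apply/cylinderE; rewrite (kd_xfun0 xl); split=> //.
by have [] := (xfun_defined x z0 q).1 (ex_intro _ l xl).
Qed.

Lemma cylinder_vertexE v : vertex v -> cylinder v = [set x | xrange_is x v].
Proof.
move=> vv; have kv : kd v = z0 by apply/funext => i; exact: vv.
apply/predeqP => x; rewrite cylinderE kv; split=> [[] //|xv].
by split=> //; have [] := (xfun_defined x z0 z0).1 (ex_intro _ v xv).
Qed.

Lemma cylinderI_Lmin mu nu x : cylinder mu x -> cylinder nu x ->
  exists2 ab, Lmin mu nu ab & cylinder (kc mu ab.1) x.
Proof.
move=> /cylinderE[mux xmu] /cylinderE[nux xnu].
set n := degk_join (kd mu) (kd nu).
have nx : degk_le_ext n (xdeg x).
  move=> i; move: (mux i) (nux i); rewrite /n /degk_join.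
  by case: (xdeg x i) => // mi; rewrite geq_max => -> ->.
have [c xc] : exists c, xfun x z0 n = Some c by apply/xfun_defined.
have [a xa] : exists a, xfun x (kd mu) n = Some a.
  by apply/xfun_defined; split=> // i; exact: leq_maxl.
have [b xb] : exists b, xfun x (kd nu) n = Some b.
  by apply/xfun_defined; split=> // i; exact: leq_maxr.
have ca := xfun_kc_eq xc xmu xa; have cb := xfun_kc_eq xc xnu xb.
exists (a, b); last by rewrite /= -ca; exact: cylinder_xfun0 xc.
by split=> /=; [exact: xfun_composable xmu xa | exact: xfun_composable xnu xb
               | rewrite -ca -cb | rewrite -ca (kd_xfun0 xc)].
Qed.

Lemma xfun_sub_cylinders x y : (forall mu, cylinder mu x -> cylinder mu y) ->
  forall p q l, xfun x p q = Some l -> xfun y p q = Some l.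
Proof.
move=> xy p q l xl.
have [pq qx] := (xfun_defined x p q).1 (ex_intro _ l xl).
have [c xc] : exists c, xfun x z0 q = Some c by apply/xfun_defined.
have /cylinderE[_] := xy _ (cylinder_xfun0 xc); rewrite (kd_xfun0 xc) => yc.
by rewrite -(xfun_agree xc yc pq (degk_le_refl q)).
Qed.

Lemma xdeg_sub_cylinders x y : (forall mu, cylinder mu x -> cylinder mu y) ->
  forall q, degk_le_ext q (xdeg x) -> degk_le_ext q (xdeg y).
Proof.
move=> xy q qx; have [c xc] : exists c, xfun x z0 q = Some c by apply/xfun_defined.
by have [] := (xfun_defined y z0 q).1 (ex_intro _ c (xfun_sub_cylinders xy xc)).
Qed.

Lemma XL_eq x y : xdeg x = xdeg y -> xfun x = xfun y -> x = y.
Proof.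
case: x => m f px; case: y => m' f' py /= em ef; subst m' f'.
by rewrite (Prop_irrelevance px py).
Qed.

Lemma XL_eq_cylinders x y : (forall mu, cylinder mu x <-> cylinder mu y) -> x = y.
Proof.
move=> xy; have xy' mu : cylinder mu x -> cylinder mu y by move/xy.
have yx' mu : cylinder mu y -> cylinder mu x by move/xy.
apply: XL_eq.
  by apply: extdeg_eq => q; split; exact: xdeg_sub_cylinders.
apply/funext => p; apply/funext => q.
case xpq: (xfun x p q) => [l|]; first by rewrite (xfun_sub_cylinders xy' xpq).
by case ypq: (xfun y p q) => [l|] //; rewrite (xfun_sub_cylinders yx' ypq) in xpq.
Qed.

Lemma nbhs_subbasis x (A : set (XL L)) : nbhs x A ->
  exists E : {fset option (bool * seq (L * L))},
    [/\ {subset E <= subbasis_index (L:=L)},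
        (\bigcap_(i in [set` E]) subbasis_set (L:=L) i) x &
        \bigcap_(i in [set` E]) subbasis_set (L:=L) i `<=` A].
Proof.
move=> [B [[D' D'sub <-] [b Db bx] BA]].
have [E Esub Eb] := D'sub _ Db.
by exists E; rewrite Eb; split=> // y yb; apply: BA; exists b.
Qed.

Lemma subbasis_set_open i : subbasis_index (L:=L) i -> open (subbasis_set (L:=L) i).
Proof.
move=> Di; exists [set subbasis_set i]; last exact: bigcup_set1.
by move=> _ ->; exact: finI_from1.
Qed.

Lemma in_S_cylinder mu : in_S [:: (mu, mu)].
Proof.
split; first by move=> lm; rewrite inE => /eqP ->.
by move=> lm lm'; rewrite !inE => /eqP -> /eqP ->; rewrite eqxx.
Qed.

Lemma cylinder_open mu : open (cylinder mu).
Proof.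
apply: (@subbasis_set_open (Some (true, [:: (mu, mu)]))).
by exists true, [:: (mu, mu)]; split=> //; exact: in_S_cylinder.
Qed.

Lemma cylinderC_open mu : open (~` cylinder mu).
Proof.
apply: (@subbasis_set_open (Some (false, [:: (mu, mu)]))).
by exists false, [:: (mu, mu)]; split=> //; exact: in_S_cylinder.
Qed.

Lemma XL_hausdorff : hausdorff_space (XL L).
Proof.
have sep mu x y : cylinder mu x -> ~ cylinder mu y -> ~ cluster (nbhs x) y.
  move=> mux muy /(_ _ _ (open_nbhs_nbhs (conj (cylinder_open mu) mux))).
  by move=> /(_ _ (open_nbhs_nbhs (conj (cylinderC_open mu) muy))) [z []].
move=> x y xy; apply: XL_eq_cylinders => mu.
split=> mu_in; apply: contrapT => mu_out.
  exact: sep mu_in mu_out xy.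
by apply: sep mu_in mu_out _ => A B yA xB; have [z []] := xy _ _ xB yA; exists z.
Qed.

End Paths.

Section Compactness.
Variables (k : nat) (L : kgraph k) (FA : finitely_aligned L).
Variables (U : set_system (XL L)) (UU : UltraFilter U) (v : L).
Hypothesis Uv : U (cylinder v).
Implicit Types (x y : XL L) (p q t : degk k) (l a b mu nu : L).

Definition ultra_mor mu := U (cylinder mu).

Lemma ultra_mor_common mu nu : ultra_mor mu -> ultra_mor nu ->
  exists y, cylinder mu y /\ cylinder nu y.
Proof. by move=> Umu Unu; have [y []] := filter_ex (filterI Umu Unu); exists y. Qed.

Lemma ultra_mor_join mu nu : ultra_mor mu -> ultra_mor nu ->
  exists2 l, ultra_mor l & kd l = degk_join (kd mu) (kd nu).
Proof.
move=> Umu Unu; have [s sE] := (finite_seqP _).1 (FA mu nu).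
have : U [set y | exists2 ab, ab \in s & cylinder (kc mu ab.1) y].
  apply: filterS (filterI Umu Unu) => y [muy nuy].
  by case: (cylinderI_Lmin muy nuy) => ab; rewrite sE; exists ab.
move=> /(ultra_seq_cup UU) [ab abs Uab].
have [_ _ _ kd_ab] : Lmin mu nu ab by rewrite sE.
by exists (kc mu ab.1).
Qed.

Lemma ultra_mor_ge q : (forall i, exists2 l, ultra_mor l & q i <= kd l i) ->
  exists2 l, ultra_mor l & degk_le q (kd l).
Proof.
move=> qU.
suff /(_ k) [l Ul ql] : forall j,
    exists2 l, ultra_mor l & forall i : 'I_k, i < j -> q i <= kd l i.
  by exists l => // i; exact: ql.
elim=> [|j [l Ul ql]]; first by exists v.
have [jk|kj] := ltnP j k; last first.
  by exists l => // i; rewrite ltnS => ij; apply: ql; exact: leq_trans (ltn_ord i) kj.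
have [l' Ul' ql'] := qU (Ordinal jk).
have [l'' Ul'' kd_l''] := ultra_mor_join Ul Ul'.
exists l'' => // i; rewrite kd_l'' ltnS leq_eqVlt /degk_join => /predU1P [ij|ij].
  have -> : i = Ordinal jk by exact: val_inj.
  exact: leq_trans ql' (leq_maxr _ _).
exact: leq_trans (ql i ij) (leq_maxl _ _).
Qed.

Definition ultra_deg_max (i : 'I_k) (n : nat) :=
  (exists2 l, ultra_mor l & kd l i = n) /\ forall l, ultra_mor l -> kd l i <= n.

(* The i-th degrees of the mu with D_mu in U either attain a maximum or are
   unbounded, in which case the limit has degree infinity in direction i. *)
Definition limit_deg : extdeg k := fun i =>
  if pselect (exists n, ultra_deg_max i n) is left e then Some (projT1 (cid e))
  else None.

Lemma limit_deg_coordP i (n : nat) :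
  (if limit_deg i is Some mi then n <= mi else true) <->
  exists2 l, ultra_mor l & n <= kd l i.
Proof.
rewrite /limit_deg; case: pselect => [e|no_max].
  case: (cid e) => /= mi [[l Ul <-] ub]; split; first by exists l.
  by case=> l' Ul' nl'; exact: leq_trans nl' (ub l' Ul').
split=> // _; apply: contrapT => ub; apply: no_max.
have bounded : forall m, `[< exists2 l, ultra_mor l & kd l i = m >] -> m <= n.
  move=> m /asboolP [l Ul <-]; rewrite leqNgt; apply/negP => nl.
  by apply: ub; exists l => //; exact: ltnW.
have attained : exists m, `[< exists2 l, ultra_mor l & kd l i = m >].
  by exists (kd v i); apply/asboolP; exists v.
have [m /asboolP mU m_max] := ex_maxnP attained bounded.
by exists m; split=> // l Ul; apply: m_max; apply/asboolP; exists l.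
Qed.

Lemma limit_degP q :
  degk_le_ext q limit_deg <-> exists2 l, ultra_mor l & degk_le q (kd l).
Proof.
split=> [qU|[l Ul ql] i].
  apply: ultra_mor_ge => i; apply/(limit_deg_coordP i).
  by move: (qU i); case: (limit_deg i).
have := (limit_deg_coordP i (q i)).2 (ex_intro2 _ _ l Ul (ql i)).
by case: (limit_deg i).
Qed.

Definition limit_seg p q l := exists mu y,
  [/\ ultra_mor mu, cylinder mu y, degk_le p q, degk_le q (kd mu)
    & xfun y p q = Some l].

Lemma limit_seg_uniq p q l l' : limit_seg p q l -> limit_seg p q l' -> l = l'.
Proof.
move=> [mu [y [Umu /cylinderE[_ ymu] pq qmu ypq]]].
move=> [nu [z [Unu /cylinderE[_ znu] _ qnu zpq]]].
have [w [/cylinderE[_ wmu] /cylinderE[_ wnu]]] := ultra_mor_common Umu Unu.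
move: (xfun_agree ymu wmu pq qmu) (xfun_agree znu wnu pq qnu).
by rewrite ypq zpq => <- [].
Qed.

Definition limit_fun p q : option L :=
  if pselect (exists l, limit_seg p q l) is left e then Some (projT1 (cid e))
  else None.

Lemma limit_funE p q l : limit_fun p q = Some l <-> limit_seg p q l.
Proof.
rewrite /limit_fun; case: pselect => [e|none]; last first.
  by split=> // seg; case: none; exists l.
case: (cid e) => /= l0 seg0; split=> [[<-] //|seg].
by rewrite (limit_seg_uniq seg0 seg).
Qed.

Lemma limit_is_kpath : is_kpath (limit_deg, limit_fun).
Proof.
split.
- move=> p q; split.
    move=> [l /limit_funE [mu [y [Umu _ pq qmu _]]]].
    by split=> //; apply/limit_degP; exists mu.
  move=> [pq /limit_degP [mu Umu qmu]].
  have [y muy] := filter_ex Umu.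
  have /cylinderE[muy_deg _] := muy.
  have [l ypq] : exists l, xfun y p q = Some l.
    by apply/xfun_defined; split=> //; exact: degk_le_ext_trans qmu muy_deg.
  by exists l; apply/limit_funE; exists mu, y.
- by move=> p q l /limit_funE [mu [y [_ _ _ _ /xfun_kd]]].
- move=> p q l /limit_funE [mu [y [Umu muy pq qmu ypq]]].
  have [ypp yqq] := xfun_kr_ks ypq.
  split; apply/limit_funE; exists mu, y; split=> //; try exact: degk_le_refl.
  exact: degk_le_trans pq qmu.
- move=> p q t a b /limit_funE [mu [y [Umu /cylinderE[_ ymu] pq qmu ypq]]].
  move=> /limit_funE [nu [z [Unu nuz qt tnu zqt]]].
  have [w [/cylinderE[_ wmu] nuw]] := ultra_mor_common Umu Unu.
  have /cylinderE[_ wnu] := nuw; have /cylinderE[_ znu] := nuz.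
  apply/limit_funE; exists nu, w; split=> //; first exact: degk_le_trans pq qt.
  rewrite -(xfun_agree wmu ymu pq qmu) in ypq.
  rewrite -(xfun_agree wnu znu qt tnu) in zqt.
  exact: xfun_kc ypq zqt.
Qed.

Definition limit_path : XL L := XPath limit_is_kpath.

Lemma cylinder_limit_path mu : cylinder mu limit_path <-> ultra_mor mu.
Proof.
split=> [/cylinderE[_ /limit_funE [nu [y [Unu nuy _ munu ymu]]]] | Umu].
  apply: filterS Unu => z /cylinderE[nuz znu]; apply/cylinderE.
  have /cylinderE[_ ynu] := nuy.
  split; first exact: degk_le_ext_trans munu nuz.
  by rewrite (xfun_agree znu ynu (fun i => leq0n _) munu).
apply/cylinderE; split; first by apply/limit_degP; exists mu; last exact: degk_le_refl.
have [y muy] := filter_ex Umu; have /cylinderE[_ ymu] := muy.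
by apply/limit_funE; exists mu, y; split=> //; exact: degk_le_refl.
Qed.

Lemma ultra_cvg_limit_path : U --> limit_path.
Proof.
move=> A /nbhs_subbasis [E [Esub EX EA]].
apply: (@filterS _ U _ _ _ EA); apply: filter_bigI => i iE.
have := EX i iE; have /set_mem [b [F [-> _]]] := Esub i iE.
case: b => /= [|notF].
  move=> /DF_cylinder [lm lF /cylinder_limit_path].
  by apply: filterS => y lm_y; apply/DF_cylinder; exists lm.
suff : U [set y | forall lm, lm \in F -> ~ cylinder lm.2 y].
  by apply: filterS => y Fy /DF_cylinder [lm lF]; exact: Fy.
apply: (filter_seq_cap (f := fun lm => ~` cylinder lm.2)) => lm lF.
have [|] := in_ultra_setVsetC (cylinder lm.2) UU => // /cylinder_limit_path ?.
by case: notF; apply/DF_cylinder; exists lm.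
Qed.

End Compactness.

Lemma cylinder_compact k (L : kgraph k) (v : L) :
  finitely_aligned L -> compact (cylinder v).
Proof.
move=> FA; rewrite compact_ultra => U UU Uv.
exists (limit_path FA UU Uv); split; last exact: ultra_cvg_limit_path.
exact/cylinder_limit_path.
Qed.

Theorem proposition5p7 (k : nat) (L : kgraph k) :
  finitely_aligned L ->
  (forall v : L, vertex v ->
     DF [:: (v, v)] = [set x : XL L | xrange_is x v] /\
     compact (DF [:: (v, v)] : set (XL L))) /\
  hausdorff_space (XL L) /\ locally_compact [set: XL L].
Proof.
move=> FA; have T2 := @XL_hausdorff k L.
split; [|split=> //].
- by move=> v vv; split; [exact: cylinder_vertexE | exact: cylinder_compact].
- move=> x _; have [v xv] := xrange_exists x.
  have v_compact : compact (cylinder v) by exact: cylinder_compact.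
  exists (cylinder v); last by split; last exact: compact_closed T2 v_compact.
  have := open_nbhs_nbhs (conj (cylinder_open v) (cylinder_xfun0 xv)).
  by rewrite /within; apply: filterS => y vy _.
Qed.
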